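(* Let $\kappa$ be a cardinal with $\mathrm{cf}(\kappa) > \omega$, let $\mathcal{A}$ and $\mathcal{B}$ be almost disjoint families on $\omega$ of size $\kappa$, and let $h : \mathcal{A} \to \mathcal{B}$ be a bijection of dense oscillation. Then there is no homeomorphism from $\Psi(\mathcal{A})$ onto $\Psi(\mathcal{B})$ that extends $h$.
   Context: An almost disjoint (AD) family on $\omega$ is a family of infinite subsets of $\omega$ any two distinct members of which have finite intersection. For an AD family $\mathcal{A}$, the space $\Psi(\mathcal{A})$ has underlying set $\omega \cup \mathcal{A}$; points of $\omega$ are isolated, and basic neighborhoods of a point $x \in \mathcal{A}$ are the sets $\{x\} \cup (x \setminus F)$ with $F \subseteq \omega$ finite. For AD families $\mathcal{A}, \mathcal{B}$ of size $\kappa$, a bijection $h : \mathcal{A} \to \mathcal{B}$ is of dense oscillation if for every $\mathcal{A}' \subseteq \mathcal{A}$ with $|\mathcal{A}'| = \kappa$ there are $x, y, z \in \mathcal{A}'$ such that $|(x \cap z) \setminus (x \cap y)| \neq |(h(x) \cap h(z)) \setminus (h(x) \cap h(y))|$. *)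

From mathcomp Require Import all_boot.
From mathcomp Require Import boolp classical_sets functions cardinality.
Set Implicit Arguments. Unset Strict Implicit. Unset Printing Implicit Defensive.
Local Open Scope classical_set_scope.
Local Open Scope card_scope.

(* cf(kappa) > omega, for a cardinal kappa represented as the cardinality of a
   set K : kappa is infinite and is not the union of countably many sets each
   of cardinality < kappa. *)
Definition cf_gt_omega (T : Type) (K : set T) : Prop :=
  infinite_set K /\
  forall P : nat -> set T, K `<=` \bigcup_n P n -> exists n, K #<= (P n `&` K).

Definition almost_disjoint (A : set (set nat)) : Prop :=
  (forall x, A x -> infinite_set x) /\
  (forall x y, A x -> A y -> x <> y -> finite_set (x `&` y)).

(* points of Psi-spaces: inl n is n in omega, inr x is the point x of the family *)
Definition psi_pt : Type := (nat + set nat)%type.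

Definition psi_carrier (A : set (set nat)) : set psi_pt :=
  [set p | match p with inl _ => True | inr x => A x end].

(* open sets of Psi(A): the topology generated by the stated basis
   (points of omega isolated; basic nbhds of x in A are {x} u (x \ F), F finite) *)
Definition psi_open (A : set (set nat)) (U : set psi_pt) : Prop :=
  U `<=` psi_carrier A /\
  forall x, U (inr x) ->
    exists F : set nat, finite_set F /\ [set inl n | n in x `\` F] `<=` U.

Definition psi_homeomorphism (A B : set (set nat)) (f : psi_pt -> psi_pt) : Prop :=
  set_bij (psi_carrier A) (psi_carrier B) f /\
  forall U, U `<=` psi_carrier A -> (psi_open A U <-> psi_open B (f @` U)).

Definition osc (x y z : set nat) : set nat := (x `&` z) `\` (x `&` y).

Definition dense_oscillation (T : Type) (K : set T) (A : set (set nat))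
    (h : set nat -> set nat) : Prop :=
  forall A', A' `<=` A -> A' #= K ->
    exists x y z, [/\ A' x, A' y, A' z & ~ (osc x y z #= osc (h x) (h y) (h z))].

From mathcomp Require Import all_boot.
From mathcomp Require Import boolp classical_sets functions cardinality.
Set Implicit Arguments. Unset Strict Implicit. Unset Printing Implicit Defensive.
Local Open Scope classical_set_scope.
Local Open Scope card_scope.

(* A homeomorphism f extending h must send the isolated points to isolated
   points, so it induces a bijection pi of omega, and comparing the canonical
   neighbourhoods of x and of h x shows that x and pi^-1(h x) differ by a
   finite set.  The pair of finite differences takes only countably many
   values, so, as cf(kappa) > omega, kappa many x in A share the same pair.
   For any three such x, y, z the oscillation osc x y z equals
   pi^-1(osc (h x) (h y) (h z)), contradicting dense oscillation. *)

Lemma cf_gt_omega_card_eq (T : Type) (U : pointedType) (K : set T) (A : set U) :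
  cf_gt_omega K -> A #= K -> cf_gt_omega A.
Proof.
move=> [infK cfK] AK; split; first by rewrite (eq_finite_set AK).
move=> P AP; have /card_set_bijP[g [gK ginj _]] := card_esym AK.
pose Q n := [set t | K t /\ P n (g t)].
have [t Kt|n KQ] := cfK Q; first by have [n _ Pn] := AP _ (gK _ Kt); exists n.
have ginjQ : {in Q n `&` K &, injective g}.
  by move=> a b /[!inE] -[_ Ka] [_ Kb]; apply: ginj; rewrite inE.
exists n; rewrite (card_le_eql AK); apply: (card_le_trans KQ).
rewrite -(card_le_eql (inj_card_eq ginjQ)).
by apply: subset_card_le => _ [t [[_ Pt] Kt] <-]; split => //; apply: gK.
Qed.

Lemma cf_gt_omega_countable_cover (U : Type) (I : countType) (A : set U)
    (P : I -> set U) :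
  cf_gt_omega A -> A `<=` \bigcup_i P i -> exists i, A #<= P i `&` A.
Proof.
move=> [infA cfA] AP.
pose Q n := if unpickle n is Some i then P i else set0.
have [x Ax|n] := cfA Q.
  by have [i _ Pi] := AP _ Ax; exists (pickle i) => //; rewrite /Q pickleK.
rewrite /Q; case: (unpickle n) => [i|]; first by exists i.
by rewrite set0I => /card_le0P A0; have [x] := infinite_setN0 infA; rewrite A0.
Qed.

Lemma card_preimage_bij (T U : Type) (f : T -> U) (S : set U) :
  injective f -> f @` setT = setT -> f @^-1` S #= S.
Proof.
move=> finj fsurj; rewrite -{2}(image_preimage S fsurj).
by apply/card_esym/inj_card_eq => a b _ _; apply: finj.
Qed.

(* Pointwise: on x `\` x' the sets x, y, z contain the point and x', y', z'
   do not, on x' `\` x the reverse, and elsewhere each set agrees with its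
   primed version. *)
Lemma osc_eq (x y z x' y' z' : set nat) :
  x `\` x' = y `\` y' -> x' `\` x = y' `\` y ->
  z `\` z' = x `\` x' -> z' `\` z = x' `\` x ->
  osc x y z = osc x' y' z'.
Proof.
move=> exy exy' ezx ezx'; apply/funext => m; apply/propeqP.
have /propeqP := congr1 (@^~ m) exy; have /propeqP := congr1 (@^~ m) exy'.
have /propeqP := congr1 (@^~ m) ezx; have /propeqP := congr1 (@^~ m) ezx'.
rewrite /osc /setD /setI /=.
have [|] := pselect (x m); have [|] := pselect (x' m);
have [|] := pselect (y m); have [|] := pselect (y' m);
have [|] := pselect (z m); have [|] := pselect (z' m); by firstorder.
Qed.

Definition psi_cone (x : set nat) : set psi_pt := inr x |` inl @` x.

Lemma psi_cone_inl (x : set nat) (n : nat) : psi_cone x (inl n) <-> x n.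
Proof. by split => [[//|[m xm [<-]]]|xn]; last by right; exists n. Qed.

Lemma psi_cone_carrier (A : set (set nat)) (x : set nat) :
  A x -> psi_cone x `<=` psi_carrier A.
Proof. by move=> Ax _ [->|[n _ <-]]. Qed.

Lemma psi_open_cone (A : set (set nat)) (x : set nat) :
  A x -> psi_open A (psi_cone x).
Proof.
move=> Ax; split; first exact: psi_cone_carrier.
move=> _ [[->]|[n _ //]]; exists set0; split; first exact: finite_set0.
by move=> _ [n [xn _] <-]; right; exists n.
Qed.

Lemma psi_open_cofinite (A : set (set nat)) (U : set psi_pt) (x : set nat) :
  psi_open A U -> U (inr x) -> finite_set (x `\` inl @^-1` U).
Proof.
move=> [_ oU] /oU[F [finF xFU]]; apply: sub_finite_set finF => m [xm Um].
by apply: contrapT => Fm; apply: Um; apply: xFU; exists m.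
Qed.

Section PsiHomeomorphismExtension.
Variables (A B : set (set nat)) (h : set nat -> set nat) (f : psi_pt -> psi_pt).
Hypotheses (hAB : set_bij A B h) (fAB : psi_homeomorphism A B f)
  (fh : forall x, A x -> f (inr x) = inr (h x)).

(* The default 0 is never used: f maps omega into omega (psi_indexE). *)
Definition psi_index (n : nat) : nat := if f (inl n) is inl m then m else 0.

Let f_inj : set_inj (psi_carrier A) f. Proof. by case: fAB => -[]. Qed.

Lemma psi_indexE (n : nat) : f (inl n) = inl (psi_index n).
Proof.
rewrite /psi_index; case E: (f (inl n)) => [//|y].
have [hA _ hB] := hAB; have [[fA _ _] _] := fAB.
have /hB[x Ax hxy] : B y by have := fA (inl n) I; rewrite E.
suff : inl n = inr x :> psi_pt by [].
by apply: f_inj; rewrite ?inE //= E fh // hxy.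
Qed.

Lemma psi_index_inj : injective psi_index.
Proof.
move=> a b eab.
have : inl a = inl b :> psi_pt by apply: f_inj; rewrite ?inE //= !psi_indexE eab.
by case.
Qed.

Lemma psi_index_surj : psi_index @` setT = setT.
Proof.
apply/seteqP; split => // k _; have [[_ _ fB] _] := fAB.
have [[m|x] Ap fp] := fB (inl k) I.
  by exists m => //; move: fp; rewrite psi_indexE => -[].
by move: fp; rewrite fh.
Qed.

Lemma finite_setD_psi_preimage (x : set nat) :
  A x -> finite_set (x `\` psi_index @^-1` h x).
Proof.
move=> Ax; have [hA _ _] := hAB; have [[_ _ fB] fopen] := fAB.
pose U := psi_carrier A `&` f @^-1` psi_cone (h x).
have fU : f @` U = psi_cone (h x).
  apply/seteqP; split => [_ [p [_ Up] <-] //|q cq].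
  have [p Ap fp] := fB q (psi_cone_carrier (hA x Ax) cq).
  by exists p => //; split; rewrite // /preimage /= fp.
have oU : psi_open A U.
  by apply/(fopen U) => [p []//|]; rewrite fU; apply: psi_open_cone (hA x Ax).
have Ux : U (inr x) by split; rewrite //= /preimage fh //; left.
apply: sub_finite_set (psi_open_cofinite oU Ux) => m [xm nhm]; split => // -[_].
by rewrite /preimage /= psi_indexE => /psi_cone_inl.
Qed.

Lemma finite_psi_preimage_setD (x : set nat) :
  A x -> finite_set (psi_index @^-1` h x `\` x).
Proof.
move=> Ax; have [[_ finj _] fopen] := fAB.
have cone_carrier := psi_cone_carrier Ax.
set V := f @` psi_cone x.
have oV : psi_open B V by apply/(fopen _ cone_carrier)/psi_open_cone.
have Vhx : V (inr (h x)) by exists (inr x); [left|rewrite fh].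
have := finite_preimage (in2W psi_index_inj) (psi_open_cofinite oV Vhx).
apply: sub_finite_set => m [hm nxm]; split => // -[p cp].
rewrite -psi_indexE => /finj fp; apply: nxm.
by apply/psi_cone_inl; rewrite -fp ?inE //; apply: cone_carrier.
Qed.

End PsiHomeomorphismExtension.

Theorem proposition8 (T : Type) (K : set T) (A B : set (set nat))
    (h : set nat -> set nat) :
  cf_gt_omega K ->
  almost_disjoint A -> almost_disjoint B ->
  A #= K -> B #= K ->
  set_bij A B h ->
  dense_oscillation K A h ->
  ~ exists f : psi_pt -> psi_pt,
      psi_homeomorphism A B f /\ (forall x, A x -> f (inr x) = inr (h x)).
Proof.
move=> cfK _ _ AK _ hAB hosc [f [fAB fh]].
pose pull x := psi_index f @^-1` h x.
pose P (s : seq nat * seq nat) :=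
  [set x | x `\` pull x = [set` s.1] /\ pull x `\` x = [set` s.2]].
have [s AP] : exists s, A #<= P s `&` A.
  apply: cf_gt_omega_countable_cover (cf_gt_omega_card_eq cfK AK) _ => x Ax.
  have /finite_seqP[s1 e1] := finite_setD_psi_preimage hAB fAB fh Ax.
  have /finite_seqP[s2 e2] := finite_psi_preimage_setD hAB fAB fh Ax.
  by exists (s1, s2).
have PA : P s `&` A `<=` A by apply: subIsetr.
have PK : P s `&` A #= K.
  by rewrite -(card_eqr AK) card_eq_le AP andbT; apply: subset_card_le.
have [x [y [z [[[ex ex'] _] [[ey ey'] _] [[ez ez'] _] nosc]]]] := hosc _ PA PK.
apply: nosc; rewrite (@osc_eq x y z (pull x) (pull y) (pull z)).
- exact: card_preimage_bij (psi_index_inj hAB fAB fh) (psi_index_surj hAB fAB fh).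
- by rewrite ex ey.
- by rewrite ex' ey'.
- by rewrite ez ex.
- by rewrite ez' ex'.
Qed.
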